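(* Consider generating measures $\mathcal{W}_1(P, \ell)$ and $\mathcal{W}_k(P, \ell)$, which are parameterized by the same probability matrix $P$ and lengths $\ell$ but different recursion depths. Let graphs $H_1, \ldots, H_k \sim \mathcal{W}_1(P, \ell)$ be independently drawn, and denote $H_i = (V, E_i)$, with nodes labelled arbitrarily. Then the intersection graph $G = (V, \cap_{i=1}^{k} E_i) = (V, E_G) \sim \mathcal{W}_k(P, \ell)$.
   Context: Multifractal network generator (MFNG): a generating measure $\mathcal{W}_k(P, \ell)$ consists of an $m$-vector of lengths $\ell$ with $\sum_{i=1}^m \ell_i = 1$, a symmetric $m \times m$ matrix $P = (p_{ij})$ with entries in $[0,1]$, and a recursion depth $k$. The indices $1,\ldots,m$ are called categories. An undirected graph $G=(V,E)$ on $N$ nodes is distributed according to $\mathcal{W}_k(P,\ell)$ if it is generated as follows: (1) partition $[0,1]$ into $m$ subintervals of lengths $\ell_1,\ldots,\ell_m$, and recursively partition each subinterval into $m$ pieces with relative lengths $\ell_i$, to depth $k$, giving $m^k$ intervals $\ell_{i_1,\ldots,i_k}$ of length $\prod_{r=1}^k \ell_{i_r}$; (2) sample $N$ points uniformly and independently from $[0,1]$ as the nodes $x_1,\ldots,x_N$, each identified by its $k$-tuple of categories $c(x_i) = (i_1,\ldots,i_k)$ according to which nested intervals it falls into; (3) for every pair of nodes with category tuples $(i_1,\ldots,i_k)$ and $(j_1,\ldots,j_k)$, independently add the edge with probability $\prod_{r=1}^k p_{i_r j_r}$. In particular, a node's category tuple equals $(c_1,\ldots,c_k)$ with probability $\prod_{r=1}^k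 \ell_{c_r}$. *)

From mathcomp Require Import all_boot all_order all_algebra.
Set Implicit Arguments. Unset Strict Implicit. Unset Printing Implicit Defensive.
Import Order.TTheory GRing.Theory Num.Theory.
Local Open Scope ring_scope.

(* An undirected simple graph on the node set 'I_N is represented by its edge
   set: a set of pairs (u, v) with u < v (each unordered pair listed once). *)
Definition upper_pairs (N : nat) : {set 'I_N * 'I_N} :=
  [set e : 'I_N * 'I_N | (nat_of_ord e.1 < nat_of_ord e.2)%N].

Definition cat_tuple (m k : nat) := {ffun 'I_k -> 'I_m}.

Definition edge_prob (R : ringType) (m k : nat) (P : 'M[R]_m)
  (a b : cat_tuple m k) : R :=
  \prod_(r < k) P (a r) (b r).

Definition tuple_prob (R : ringType) (m k : nat) (ell : 'I_m -> R)
  (a : cat_tuple m k) : R :=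
  \prod_(r < k) ell (a r).

Definition mfng_law (R : ringType) (m k N : nat) (P : 'M[R]_m)
  (ell : 'I_m -> R) (g : {set 'I_N * 'I_N}) : R :=
  if g \subset upper_pairs N then
    \sum_(c : {ffun 'I_N -> cat_tuple m k})
      (\prod_(v : 'I_N) tuple_prob ell (c v)) *
      \prod_(e in upper_pairs N)
        (if e \in g then edge_prob P (c e.1) (c e.2)
         else 1 - edge_prob P (c e.1) (c e.2))
  else 0.

Definition intersection_law (R : ringType) (m k N : nat) (P : 'M[R]_m)
  (ell : 'I_m -> R) (g : {set 'I_N * 'I_N}) : R :=
  \sum_(H : {ffun 'I_k -> {set 'I_N * 'I_N}} | (\bigcap_(j < k) H j) == g)
    \prod_(j < k) mfng_law 1 P ell (H j).

(* Conditionally on the categories, every pair (u, v) is an edge of H_j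
   independently with probability q_j(u, v), so it lies in the intersection
   with probability prod_j q_j(u, v), again independently over pairs.
   Collecting the k independent depth-1 category assignments of a node into a
   single depth-k tuple turns these products into the depth-k tuple and edge
   probabilities of W_k(P, ell). *)
From Pilot Require Import Defs.
From mathcomp Require Import all_boot all_order all_algebra.
Set Implicit Arguments. Unset Strict Implicit. Unset Printing Implicit Defensive.
Import Order.TTheory GRing.Theory Num.Theory.
Local Open Scope ring_scope.

Section Bernoulli.
Variable R : comNzRingType.

Definition bern (q : R) (b : bool) : R := if b then q else 1 - q.

Lemma sum_prod_bern (I : finType) (q : I -> R) :
  \sum_(x : {ffun I -> bool}) \prod_i bern (q i) (x i) = 1.
Proof.
rewrite -(bigA_distr_bigA (fun i => bern (q i))).
by apply: big1 => i _; rewrite big_bool /= addrC subrK.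
Qed.

Lemma sum_prod_bern_all (I : finType) (q : I -> R) (b : bool) :
  \sum_(x : {ffun I -> bool})
    ([forall i, x i] == b)%:R * \prod_i bern (q i) (x i)
  = bern (\prod_i q i) b.
Proof.
have all_true : \sum_(x : {ffun I -> bool}) [forall i, x i]%:R *
    \prod_i bern (q i) (x i) = \prod_i q i.
  rewrite (bigD1 [ffun => true]) //= [X in _ + X]big1 => [|x ntrue_x].
    have -> : [forall i, ([ffun=> true] : {ffun I -> bool}) i].
      by apply/forallP => i; rewrite ffunE.
    by rewrite mul1r addr0; apply: eq_bigr => i _; rewrite ffunE.
  suff -> : [forall i, x i] = false by rewrite mul0r.
  apply: contraNF ntrue_x => /forallP x_true.
  by apply/eqP/ffunP => i; rewrite ffunE x_true.
case: b.
  by rewrite [RHS]/bern -all_true; apply: eq_bigr => x _; rewrite eqb_id.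
rewrite [RHS]/bern -all_true -[X in X - _](sum_prod_bern q) -sumrB.
apply: eq_bigr => x _; rewrite eqbF_neg.
by case: [forall i, x i]; rewrite /= ?mul1r ?mul0r ?subrr ?subr0.
Qed.

Lemma prod_bool_if (T : finType) (b : T -> bool) (X : R) :
  (if [forall e, b e] then X else 0) = (\prod_e (b e)%:R) * X.
Proof.
case: ifP => [/forallP b_all | /negbT /forallPn [e nbe]].
  by rewrite big1 ?mul1r // => e _; rewrite b_all.
by rewrite (bigD1 e) //= (negbTE nbe) !mul0r.
Qed.

(* If the H_i are independent random subsets of E containing each e
   independently with probability q i e, the left side is P(cap_i H_i = g). *)
Lemma sum_bigcap_bern (I E : finType) (q : I -> E -> R) (g : {set E}) :
  \sum_(H : {ffun I -> {set E}} | \bigcap_i H i == g)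
     \prod_i \prod_e bern (q i e) (e \in H i)
  = \prod_e bern (\prod_i q i e) (e \in g).
Proof.
pose sets_of (X : {ffun E -> {ffun I -> bool}}) : {ffun I -> {set E}} :=
  [ffun i => [set e | X e i]].
have sets_of_bij : bijective sets_of.
  exists (fun H : {ffun I -> {set E}} => [ffun e => [ffun i => e \in H i]])
    => [X | H].
    by apply/ffunP => e; apply/ffunP => i; rewrite !ffunE inE.
  by apply/ffunP => i; apply/setP => e; rewrite !ffunE inE !ffunE.
rewrite big_mkcond (reindex sets_of) /=; last exact: onW_bij.
under [RHS]eq_bigr do rewrite -sum_prod_bern_all.
rewrite bigA_distr_bigA; apply: eq_bigr => X _.
have mem_cap e : (e \in \bigcap_i sets_of X i) = [forall i, X e i].
  apply/bigcapP/forallP => [X_e i | X_e i _]; last by rewrite ffunE inE X_e.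
  by have := X_e i isT; rewrite ffunE inE.
have -> : (\bigcap_i sets_of X i == g) =
          [forall e, [forall i, X e i] == (e \in g)].
  apply/eqP/forallP => [<- e | X_g]; first by rewrite mem_cap.
  by apply/setP => e; rewrite mem_cap; exact: (eqP (X_g e)).
rewrite prod_bool_if exchange_big -big_split /=.
apply: eq_bigr => e _; congr (_ * _).
by apply: eq_bigr => i _; rewrite ffunE inE.
Qed.

End Bernoulli.

Section Mfng.
Variables (R : comNzRingType) (m N : nat) (P : 'M[R]_m) (ell : 'I_m -> R).

(* Pairs outside [upper_pairs N] get edge probability 0, so that a law over
   arbitrary edge sets vanishes on non-simple ones. *)
Definition masked_edge_prob (k : nat) (c : {ffun 'I_N -> Defs.cat_tuple m k})
  (e : 'I_N * 'I_N) : R :=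
  if e \in upper_pairs N then edge_prob P (c e.1) (c e.2) else 0.

Lemma mfng_lawE k (g : {set 'I_N * 'I_N}) :
  mfng_law k P ell g =
  \sum_(c : {ffun 'I_N -> Defs.cat_tuple m k})
    (\prod_v tuple_prob ell (c v)) *
    \prod_e bern (masked_edge_prob c e) (e \in g).
Proof.
rewrite /mfng_law; case: ifP => [gU | /negbT /subsetPn [e ge nUe]].
  apply: eq_bigr => c _; congr (_ * _).
  rewrite [RHS](bigID (mem (upper_pairs N))) /= [X in _ * X]big1 ?mulr1.
    by apply: eq_bigr => e Ue; rewrite /masked_edge_prob Ue.
  move=> e nUe; rewrite /masked_edge_prob (negbTE nUe).
  by rewrite (contraNF (subsetP gU e) nUe) /bern subr0.
symmetry; apply: big1 => c _.
by rewrite (bigD1 e) //= /masked_edge_prob (negbTE nUe) ge /bern mul0r mulr0.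
Qed.

Definition stack_levels k
  (C : {ffun 'I_k -> {ffun 'I_N -> Defs.cat_tuple m 1}}) :
  {ffun 'I_N -> Defs.cat_tuple m k} := [ffun v => [ffun r => C r v ord0]].

Lemma stack_levels_bij k : bijective (@stack_levels k).
Proof.
exists (fun c : {ffun 'I_N -> Defs.cat_tuple m k} =>
  [ffun r => [ffun v => [ffun=> c v r]]]) => [C | c].
  apply/ffunP => r; apply/ffunP => v; apply/ffunP => i.
  by rewrite !ffunE (ord1 i).
by apply/ffunP => v; apply/ffunP => r; rewrite !ffunE.
Qed.

Lemma tuple_prob_stack k C v :
  tuple_prob ell (@stack_levels k C v) = \prod_r tuple_prob ell (C r v).
Proof. by apply: eq_bigr => r _; rewrite /tuple_prob big_ord1 !ffunE. Qed.

Lemma masked_edge_prob_stack k C e : (0 < k)%N ->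
  masked_edge_prob (@stack_levels k C) e = \prod_r masked_edge_prob (C r) e.
Proof.
rewrite /masked_edge_prob => k_gt0; case: ifP => _.
  by apply: eq_bigr => r _; rewrite /edge_prob big_ord1 !ffunE.
by rewrite prodr_const card_ord expr0n gtn_eqF.
Qed.

End Mfng.

Theorem lemma1 (R : realFieldType) (m k N : nat) (P : 'M[R]_m)
  (ell : 'I_m -> R)
  (HPsym : forall i j, P i j = P j i)
  (HP01 : forall i j, 0 <= P i j <= 1)
  (Hell0 : forall i, 0 <= ell i)
  (Hell1 : \sum_(i < m) ell i = 1)
  (Hk : (0 < k)%N) :
  forall g : {set 'I_N * 'I_N},
    intersection_law k P ell g = mfng_law k P ell g.
Proof.
move=> g; rewrite /intersection_law.
under eq_bigr do under eq_bigr do rewrite mfng_lawE.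
under eq_bigr do rewrite bigA_distr_bigA.
rewrite exchange_big mfng_lawE (reindex (@stack_levels m N k)) /=;
  last exact: onW_bij (stack_levels_bij m N k).
apply: eq_bigr => C _.
under eq_bigr do rewrite big_split /=.
rewrite -big_distrr /= sum_bigcap_bern; congr (_ * _).
  by rewrite exchange_big; apply: eq_bigr => v _; rewrite tuple_prob_stack.
by apply: eq_bigr => e _; rewrite masked_edge_prob_stack.
Qed.
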